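(* Let $N_s,\beta,\varepsilon$ be positive integers, $P_b\in(0,1]$, and for $0\le j\le N_s-1$ let $N(j)=N_s-j$, $\gamma(j)=N(j)-\beta$, $\hat{\varepsilon}(j)=\min\{\gamma(j),\varepsilon\}$ (when $\gamma(j)\ge 0$), and $P_W(j)=(1-P_b)^jP_b$. Consider an ED $\mathrm{E}'$ whose wake-up slot $W$ satisfies $P(W=j)=P_W(j)$ for $0\le j\le N_s-1$ (with the remaining probability it never wakes up and transmits nothing), and which, after waking up, transmits according to one of the two schemes described in the context. Then for every slot $s\in\{0,\dots,N_s-1\}$, the probability that $\mathrm{E}'$ transmits a frame in slot $s$ is \[ P_{\mathrm{col}}(s)=\sum_{j=0}^{\min\{N_s-\beta-y,\,s\}}\frac{\beta+r_j}{N(j)}P_W(j)\;+\;\theta_s\sum_{j=N_s-\beta-y+1}^{s}\min\left\{\frac{\beta}{N(j)},1\right\}P_W(j), \] where $r_j=y=\varepsilon$ for the fountain-coding scheme, $r_j=\hat{\varepsilon}(j)$ and $y=0$ for the message-replication scheme, $\theta_s=1$ if $s>N_s-\beta-y$ and $\theta_s=0$ otherwise, and empty sums are zero.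
   Context: An ED has $\beta$ messages to deliver to a UAV during a session of $N_s$ slots (numbered $0,\dots,N_s-1$). An ED waking in slot $i$ may use only the $N(i)=N_s-i$ slots $i,\dots,N_s-1$, transmitting at most one frame per slot; $\varepsilon\ge 1$ is a design parameter. Whenever the ED has $K\le N(i)$ frames to send, it places them in $K$ distinct slots chosen uniformly at random among the $N(i)$ available slots. Fountain-coding scheme: if $\gamma(i)\ge\varepsilon$, the ED sends $\beta+\varepsilon$ coded frames in $\beta+\varepsilon$ uniformly random distinct available slots; if $\gamma(i)<\varepsilon$ and $\beta\le N(i)$, it sends its $\beta$ uncoded messages in $\beta$ uniformly random distinct available slots; if $\beta>N(i)$, it sends $N(i)$ randomly selected messages, one in each available slot. Message-replication scheme: if $\gamma(i)\ge 0$, the ED sends $\beta+\hat{\varepsilon}(i)$ frames (message replicas) in $\beta+\hat{\varepsilon}(i)$ uniformly random distinct available slots; if $\gamma(i)<0$, it sends $N(i)$ randomly selected messages, one in each available slot. *)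

(* Discrete probability model of the ED E' on a finite
   outcome space: (wake-up slot or None) x (set of slots used). *)
From HB Require Import structures.
From mathcomp Require Import all_boot all_order all_algebra.
Unset Printing Implicit Defensive.
Import Order.TTheory GRing.Theory Num.Theory.
Local Open Scope ring_scope.

Inductive scheme := Fountain | Replication.

Definition Nav (Ns j : nat) : nat := (Ns - j)%N.

Definition nframes (sc : scheme) (Ns beta eps j : nat) : nat :=
  let N := Nav Ns j in
  match sc with
  | Fountain =>
      (* gamma(j) >= eps  <->  N >= beta + eps *)
      if (beta + eps <= N)%N then (beta + eps)%N
      else if (beta <= N)%N then beta else N
  | Replication =>
      (* gamma(j) >= 0 <-> N >= beta ; eps_hat(j) = min(gamma(j), eps) *)
      if (beta <= N)%N then (beta + minn (N - beta) eps)%N else N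
  end.

Definition PW {R : realFieldType} (Pb : R) (j : nat) : R := (1 - Pb) ^+ j * Pb.

Definition avail (Ns : nat) (j : 'I_Ns) : {set 'I_Ns} := [set i : 'I_Ns | (j <= i)%N].

Definition placements (sc : scheme) (Ns beta eps : nat) (j : 'I_Ns) : {set {set 'I_Ns}} :=
  [set S : {set 'I_Ns} | (S \subset @avail Ns j) && (#|S| == nframes sc Ns beta eps j)].

Definition outcome_prob {R : realFieldType} (sc : scheme) (Ns beta eps : nat) (Pb : R)
    (o : option 'I_Ns * {set 'I_Ns}) : R :=
  match o.1 with
  | Some j => PW Pb j *
      (if o.2 \in placements sc Ns beta eps j
       then (#|placements sc Ns beta eps j|%:R)^-1 else 0)
  | None => (1 - \sum_(j < Ns) PW Pb j) * (if o.2 == set0 then 1 else 0)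
  end.

Definition P_tx {R : realFieldType} (sc : scheme) (Ns beta eps : nat) (Pb : R)
    (s : 'I_Ns) : R :=
  \sum_(o : option 'I_Ns * {set 'I_Ns} | s \in o.2) outcome_prob sc Ns beta eps Pb o.

Definition r_j (sc : scheme) (Ns beta eps j : nat) : nat :=
  match sc with Fountain => eps | Replication => minn (Nav Ns j - beta) eps end.
Definition y_of (sc : scheme) (eps : nat) : nat :=
  match sc with Fountain => eps | Replication => 0%N end.

Definition P_col {R : realFieldType} (sc : scheme) (Ns beta eps : nat) (Pb : R)
    (s : nat) : R :=
  let L : int := (Ns%:Z - beta%:Z - (y_of sc eps)%:Z)%R in
  let theta : R := if (L < s%:Z)%R then 1 else 0 in
  \sum_(j < Ns | (j%:Z <= Num.min L s%:Z)%R)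
     ((beta + r_j sc Ns beta eps j)%:R / (Nav Ns j)%:R) * PW Pb j
  + theta * \sum_(j < Ns | (L + 1 <= j%:Z)%R && (j <= s)%N)
     Num.min (beta%:R / (Nav Ns j)%:R) 1 * PW Pb j.

(* A uniformly random K-subset of the N slots available to an ED that woke up
   in slot j contains a given available slot s with probability K/N, since
   exactly C(N-1, K-1) of the C(N, K) subsets contain it.  Hence P_tx(s) is
   the sum over j <= s of P_W(j) K(j)/N(j).  Up to the last slot
   N_s - beta - y at which the ED can afford its redundancy, K(j) = beta + r_j;
   after it, K(j) = min(beta, N(j)), which gives the two sums of P_col. *)
From mathcomp Require Import all_boot all_order all_algebra.
From mathcomp Require Import zify.
Import Order.TTheory GRing.Theory Num.Theory.
Local Open Scope ring_scope.

Section Draws.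

Variables (T : finType) (A : {set T}) (x : T) (k : nat).

Lemma card_draws_mem : x \in A -> (0 < k)%N ->
  #|[set S : {set T} | (S \subset A) && (#|S| == k) & x \in S]| = 'C(#|A|.-1, k.-1).
Proof.
move=> xA k_gt0.
have x_notin (S : {set T}) : S \subset A :\ x -> x \notin S.
  by move/subsetP=> SAx; apply/negP=> /SAx; rewrite !inE eqxx.
have -> : [set S : {set T} | (S \subset A) && (#|S| == k) & x \in S] =
    [set x |: S | S in [set S : {set T} | S \subset A :\ x & #|S| == k.-1]].
  apply/setP=> S; apply/idP/imsetP.
  - rewrite !inE => /andP[/andP[SA /eqP cardS] xS].
    exists (S :\ x); last by rewrite setD1K.
    by rewrite inE setSD //= -cardS (cardsD1 x S) xS.
  - case=> S'; rewrite inE => /andP[S'A /eqP cardS'] ->.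
    rewrite !inE eqxx orTb andbT subUset sub1set xA (subset_trans S'A) ?subsetDl //=.
    by rewrite cardsU1 x_notin // cardS' add1n prednK.
rewrite card_in_imset; first by rewrite cards_draws (cardsD1 x A) xA.
move=> S1 S2; rewrite !inE => /andP[S1A _] /andP[S2A _] eqS.
by rewrite -(setU1K (x_notin _ S1A)) -(setU1K (x_notin _ S2A)) eqS.
Qed.

Lemma draws_mem_ratio (R : numFieldType) : (0 < k <= #|A|)%N ->
  (#|[set S : {set T} | (S \subset A) && (#|S| == k) & x \in S]|%:R
   / #|[set S : {set T} | (S \subset A) && (#|S| == k)]|%:R : R)
  = if x \in A then k%:R / #|A|%:R else 0.
Proof.
case/andP=> k_gt0 leq_kA; case: ifP => xA.
  rewrite card_draws_mem // cards_draws.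
  have bin_neq0 : 'C(#|A|, k) != 0%N by rewrite -lt0n bin_gt0.
  have A_neq0 : #|A| != 0%N by lia.
  have := mul_bin_diag #|A| k.-1; rewrite prednK // => bin_rec.
  by apply/eqP; rewrite eqr_div ?pnatr_eq0 // -!natrM mulnC bin_rec mulnC.
have -> : [set S : {set T} | (S \subset A) && (#|S| == k) & x \in S] = set0.
  apply/setP=> S; rewrite !inE; apply/negP=> /andP[/andP[/subsetP SA _] xS].
  by rewrite SA in xA.
by rewrite cards0 mul0r.
Qed.

End Draws.

Lemma minr_divn1 (R : realFieldType) (b N : nat) : (0 < N)%N ->
  Num.min (b%:R / N%:R : R) 1 = (minn b N)%:R / N%:R.
Proof.
move=> N_gt0; have N_gt0' : 0 < N%:R :> R by rewrite ltr0n.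
case: (leqP b N) => [le_bN | lt_Nb].
  by apply/min_idPl; rewrite ler_pdivrMr // mul1r ler_nat.
by rewrite divff ?gt_eqF //; apply/min_idPr; rewrite ler_pdivlMr // mul1r ler_nat ltnW.
Qed.

Lemma card_avail Ns (j : 'I_Ns) : #|avail Ns j| = (Ns - j)%N.
Proof.
rewrite cardsE -sum1_card.
have := @big_geq_mkord _ 0%N addn j Ns xpredT (fun=> 1%N).
by rewrite sum_nat_const_nat muln1 => ->; apply: eq_bigl.
Qed.

Lemma nframes_gt0 sc Ns beta eps (j : 'I_Ns) : (0 < beta)%N ->
  (0 < nframes sc Ns beta eps j)%N.
Proof.
by move=> beta_gt0; have := ltn_ord j; rewrite /nframes /Nav; case: sc; repeat case: ifP; lia.
Qed.

Lemma nframes_le_Nav sc Ns beta eps j : (nframes sc Ns beta eps j <= Nav Ns j)%N.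
Proof. by rewrite /nframes; case: sc; repeat case: ifP; lia. Qed.

Lemma P_tx_given_wake (R : realFieldType) sc Ns beta eps (Pb : R) (s j : 'I_Ns) :
  (0 < beta)%N ->
  \sum_(S : {set 'I_Ns})
     (if s \in S then outcome_prob sc Ns beta eps Pb (Some j, S) else 0)
  = PW Pb j * (if (j <= s)%N then (nframes sc Ns beta eps j)%:R / (Nav Ns j)%:R else 0).
Proof.
move=> beta_gt0; set K := nframes sc Ns beta eps j.
set hits := [set S : {set 'I_Ns} | (S \subset avail Ns j) && (#|S| == K) & s \in S].
rewrite (eq_bigr (fun S => PW Pb j *
    (if S \in hits then (#|placements sc Ns beta eps j|%:R)^-1 else 0))); last first.
  move=> S _; rewrite /outcome_prob /= inE [in RHS]inE.
  by case: (s \in S); rewrite ?andbT ?andbF ?mulr0.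
rewrite -mulr_sumr -big_mkcond /= sumr_const -[_ *+ #|hits|]mulr_natl; congr (_ * _).
have K_bounds : (0 < K <= #|avail Ns j|)%N.
  by rewrite nframes_gt0 // card_avail nframes_le_Nav.
by rewrite draws_mem_ratio // card_avail inE.
Qed.

Lemma P_tx_wake_sum (R : realFieldType) sc Ns beta eps (Pb : R) (s : 'I_Ns) :
  (0 < beta)%N ->
  P_tx sc Ns beta eps Pb s = \sum_(j < Ns) PW Pb j *
     (if (j <= s)%N then (nframes sc Ns beta eps j)%:R / (Nav Ns j)%:R else 0).
Proof.
move=> beta_gt0; rewrite /P_tx.
rewrite (eq_bigr (fun o => outcome_prob sc Ns beta eps Pb (o.1, o.2))); last by case.
rewrite big_mkcond /= -(pair_big xpredT xpredT
  (fun (a : option 'I_Ns) (S : {set 'I_Ns}) =>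
     if s \in S then outcome_prob sc Ns beta eps Pb (a, S) else 0)) /=.
have asleep_silent (S : {set 'I_Ns}) :
    (if s \in S then outcome_prob sc Ns beta eps Pb (None, S) else 0) = 0.
  case: ifP => // sS; rewrite /outcome_prob /=.
  have /negbTE -> : S != set0 by apply/set0Pn; exists s.
  by rewrite mulr0.
rewrite (bigD1 None) //= big1 // add0r (reindex_omap Some id) /=; last by case.
by apply: eq_big => [j|j _]; rewrite ?eqxx ?P_tx_given_wake.
Qed.

Definition threshold (sc : scheme) (Ns beta eps : nat) : int :=
  Ns%:Z - beta%:Z - (y_of sc eps)%:Z.

Lemma nframes_le_threshold sc Ns beta eps j :
  (j%:Z <= threshold sc Ns beta eps)%R ->
  nframes sc Ns beta eps j = (beta + r_j sc Ns beta eps j)%N.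
Proof. by rewrite /threshold /nframes /r_j /Nav; case: sc => /=; repeat case: ifP; lia. Qed.

Lemma nframes_gt_threshold sc Ns beta eps j :
  (threshold sc Ns beta eps < j%:Z)%R ->
  nframes sc Ns beta eps j = minn beta (Nav Ns j).
Proof. by rewrite /threshold /nframes /Nav; case: sc => /=; repeat case: ifP; lia. Qed.

Lemma P_tx_term_split (R : realFieldType) sc Ns beta eps (Pb : R) (s j : 'I_Ns) :
  let L := threshold sc Ns beta eps in
  PW Pb j * (if (j <= s)%N then (nframes sc Ns beta eps j)%:R / (Nav Ns j)%:R else 0)
  = (if (j%:Z <= Num.min L s%:Z)%R then
       ((beta + r_j sc Ns beta eps j)%:R / (Nav Ns j)%:R) * PW Pb j else 0)
  + (if (L + 1 <= j%:Z)%R && (j <= s)%N then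
       Num.min (beta%:R / (Nav Ns j)%:R) 1 * PW Pb j else 0).
Proof.
move=> L; rewrite le_min lez_nat mulrC.
have [le_js | _] := leqP j s; last by rewrite !andbF mul0r addr0.
rewrite !andbT.
have [le_jL | lt_Lj] := boolP (j%:Z <= L)%R.
  have -> : (L + 1 <= j%:Z)%R = false by lia.
  by rewrite nframes_le_threshold // addr0.
have -> : (L + 1 <= j%:Z)%R by lia.
have Nav_gt0 : (0 < Nav Ns j)%N by rewrite /Nav subn_gt0.
by rewrite add0r minr_divn1 // nframes_gt_threshold //; lia.
Qed.

Theorem lemma2 (R : realFieldType) (sc : scheme) (Ns beta eps : nat) (Pb : R)
  (hNs : (0 < Ns)%N) (hbeta : (0 < beta)%N) (heps : (0 < eps)%N)
  (hPb0 : 0 < Pb) (hPb1 : Pb <= 1) (s : 'I_Ns) :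
  P_tx sc Ns beta eps Pb s = P_col sc Ns beta eps Pb s.
Proof.
rewrite P_tx_wake_sum // /P_col -/(threshold sc Ns beta eps).
set L := threshold sc Ns beta eps.
set tail := \sum_(j < Ns | (L + 1 <= j%:Z)%R && (j <= s)%N) _.
have -> : (if (L < s%:Z)%R then 1 else 0) * tail = tail.
  case: ifPn => [_|]; first by rewrite mul1r.
  rewrite -leNgt => le_sL; rewrite /tail big_pred0 ?mulr0 // => j.
  by apply/negbTE/negP => /andP[]; lia.
rewrite /tail [X in _ = X + _]big_mkcond [X in _ = _ + X]big_mkcond -big_split /=.
by apply: eq_bigr => j _; rewrite P_tx_term_split.
Qed.
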